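(* Let $(X,d)$ be a geodesic metric space and $x_0\in X$. Then the end-approximating tree $(T_X,d^* )$ of $X$ with respect to $x_0$ is an $\mathbb{R}$-tree.
   Context: For $x,y\in X$ let $(x,y)_{x_0}=\frac12(d(x_0,x)+d(x_0,y)-d(x,y))$. Let $S_{x,y}$ be the set of all finite sequences $x=x_1,x_2,\ldots,x_n=y$ in $X$ ($n\in\mathbb{N}$), and define $(x,y)'_{x_0}=\sup_{S_{x,y}}\min_{1\leqslant i\leqslant n-1}(x_i,x_{i+1})_{x_0}$ and $d'(x,y)=d(x_0,x)+d(x_0,y)-2(x,y)'_{x_0}$; $d'$ is a pseudometric. The end-approximating tree $T_X$ is the quotient $X/\sim$, where $x\sim y$ iff $d'(x,y)=0$, with metric $d^*([x],[y])=d'(x,y)$. An $\mathbb{R}$-tree is a metric space in which any two points are joined by a unique topological arc, and this arc is a geodesic. *)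

From Stdlib Require Import Reals Lra List ClassicalEpsilon.
From Coquelicot Require Import Coquelicot.
Open Scope R_scope.

Section Defs.
Context {T : Type} (dist : T -> T -> R).

Definition is_metric : Prop :=
  (forall x y, 0 <= dist x y) /\
  (forall x y, dist x y = 0 <-> x = y) /\
  (forall x y, dist x y = dist y x) /\
  (forall x y z, dist x z <= dist x y + dist y z).

Definition isometric_on (L : R) (g : R -> T) : Prop :=
  forall s t, 0 <= s <= L -> 0 <= t <= L -> dist (g s) (g t) = Rabs (s - t).

Definition geodesic_space : Prop :=
  forall x y, exists g : R -> T,
    g 0 = x /\ g (dist x y) = y /\ isometric_on (dist x y) g.

Definition continuous_on_interval (L : R) (f : R -> T) : Prop :=
  forall s, 0 <= s <= L -> forall eps, 0 < eps -> exists delta, 0 < delta /\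
    forall t, 0 <= t <= L -> Rabs (t - s) < delta -> dist (f t) (f s) < eps.

(** [A] is a topological arc from [x] to [y]: the image of a continuous
    injective map on a compact interval [0, L] sending 0 to x and L to y.
    (When x = y injectivity forces L = 0 and A = {x}.) *)
Definition is_arc (x y : T) (A : T -> Prop) : Prop :=
  exists (L : R) (f : R -> T), 0 <= L /\ f 0 = x /\ f L = y /\
    continuous_on_interval L f /\
    (forall s t, 0 <= s <= L -> 0 <= t <= L -> f s = f t -> s = t) /\
    (forall p, A p <-> exists t, 0 <= t <= L /\ f t = p).

Definition is_geodesic_set (x y : T) (A : T -> Prop) : Prop :=
  exists g : R -> T, g 0 = x /\ g (dist x y) = y /\ isometric_on (dist x y) g /\
    (forall p, A p <-> exists t, 0 <= t <= dist x y /\ g t = p).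

Definition is_Rtree : Prop :=
  is_metric /\
  forall x y, exists A, is_arc x y A /\
    (forall B, is_arc x y B -> forall p, B p <-> A p) /\
    is_geodesic_set x y A.
End Defs.

Section EndTree.
Context {X : Type} (d : X -> X -> R) (x0 : X).

Definition gromov (x y : X) : R := (d x0 x + d x0 y - d x y) / 2.

Fixpoint chain_min (a : X) (l : list X) : R :=
  match l with
  | nil => 0 (* never used: sequences have n >= 2 *)
  | b :: l' =>
      match l' with
      | nil => gromov a b
      | _ :: _ => Rmin (gromov a b) (chain_min b l')
      end
  end.

(** the values min_i (x_i,x_{i+1})_{x0} over finite sequences
    x = x_1, x_2, ..., x_n = y with n >= 2, encoded as x :: l *)
Definition chain_values (x y : X) : R -> Prop :=
  fun r => exists l : list X, l <> nil /\ last l x = y /\ r = chain_min x l.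

Definition gromov' (x y : X) : R := real (Lub_Rbar (chain_values x y)).

Definition dprime (x y : X) : R := d x0 x + d x0 y - 2 * gromov' x y.

(** T_X = X / ~ where x ~ y iff d'(x,y) = 0; a point is an equivalence class *)
Definition TX : Type :=
  { P : X -> Prop | exists x : X, P = (fun z => dprime x z = 0) }.

Definition TX_rep (A : TX) : X :=
  proj1_sig (constructive_indefinite_description _ (proj2_sig A)).

Definition dstar (A B : TX) : R := dprime (TX_rep A) (TX_rep B).
End EndTree.

(* Write N z = d(x0, z) and P = (.,.)'_{x0}, so that d' z w = N z + N w - 2 P z w.
   Since chains can be concatenated and reversed, P is symmetric and 0-hyperbolic,
   P x z >= min (P x y) (P y z); and the points of a geodesic from x0 to z provide, in T_X,
   points "below" [z] (N w <= P w z) at every height between 0 and N z.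
   In any space with these properties, the points below [A] or below [B] of height at
   least P A B form a geodesic from [A] to [B]. Every arc from [A] to [B] passes through
   each such point w below [A]: at the first time t where P (f t) A drops to N w, the arc
   is at w. Conversely, a point p of an injective arc is the center of the tripod
   [A, p, B], since that center lies on the arc both before and after p; and the center
   lies on the geodesic from [A] to [B]. *)

From Pilot Require Import Defs.
From Stdlib Require Import Reals Lra List.
From Stdlib Require Import ClassicalEpsilon FunctionalExtensionality PropExtensionality ProofIrrelevance.
From Coquelicot Require Import Coquelicot.
Open Scope R_scope.

Section ContinuousPaths.
Context {T : Type} (dist : T -> T -> R).

Lemma continuous_on_interval_rev L f :
  continuous_on_interval dist L f -> continuous_on_interval dist L (fun s => f (L - s)).
Proof.
  intros Hc s Hs eps Heps. destruct (Hc (L - s) ltac:(lra) eps Heps) as [delta [Hd Ht]].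
  exists delta; split; auto. intros t Ht1 Ht2. apply Ht; [lra|].
  replace (L - t - (L - s)) with (- (t - s)) by ring. rewrite Rabs_Ropp; auto.
Qed.

Lemma continuous_on_interval_restrict L a f :
  0 <= a <= L -> continuous_on_interval dist L f -> continuous_on_interval dist a f.
Proof.
  intros Ha Hc s Hs eps Heps. destruct (Hc s ltac:(lra) eps Heps) as [delta [Hd Ht]].
  exists delta; split; auto. intros t Ht1 Ht2. apply Ht; auto; lra.
Qed.

Lemma continuous_on_interval_shift L a f :
  0 <= a <= L -> continuous_on_interval dist L f ->
  continuous_on_interval dist (L - a) (fun s => f (a + s)).
Proof.
  intros Ha Hc s Hs eps Heps. destruct (Hc (a + s) ltac:(lra) eps Heps) as [delta [Hd Ht]].
  exists delta; split; auto. intros t Ht1 Ht2. apply Ht; [lra|].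
  replace (a + t - (a + s)) with (t - s) by ring. auto.
Qed.

Lemma continuous_on_interval_left L f m :
  continuous_on_interval dist L f -> 0 < m <= L ->
  forall eps, 0 < eps -> exists u, 0 <= u < m /\ dist (f u) (f m) < eps.
Proof.
  intros Hc Hm eps Heps. destruct (Hc m ltac:(lra) eps Heps) as [delta [Hd Ht]].
  set (u := Rmax 0 (m - delta / 2)).
  assert (Hu : 0 <= u < m /\ m - delta / 2 <= u)
    by (unfold u, Rmax; destruct (Rle_dec _ _); lra).
  exists u. split; [lra|]. apply Ht; [lra|]. apply Rabs_def1; lra.
Qed.

Lemma continuous_on_interval_comp L f (h : T -> R) :
  (forall a b, Rabs (h a - h b) <= dist a b) ->
  continuous_on_interval dist L f -> continuous_on_interval Rdist L (fun s => h (f s)).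
Proof.
  intros Hh Hc s Hs eps Heps. destruct (Hc s Hs eps Heps) as [delta [Hd Ht]].
  exists delta; split; auto. intros t Ht1 Ht2.
  eapply Rle_lt_trans; [apply Hh|apply Ht; auto].
Qed.
End ContinuousPaths.

Lemma first_crossing (phi : R -> R) L c :
  0 <= L -> continuous_on_interval Rdist L phi -> c < phi 0 -> phi L <= c ->
  exists m, 0 < m <= L /\ phi m = c /\ forall u, 0 <= u < m -> c < phi u.
Proof.
  intros HL Hc H0 HLc.
  (* [m] is the supremum of the times up to which [phi] stays above [c]. *)
  set (E := fun s => 0 <= s <= L /\ forall u, 0 <= u <= s -> c < phi u).
  assert (E0 : E 0).
  { split; [lra|]. intros u Hu. replace u with 0 by lra. exact H0. }
  destruct (completeness E) as [m [Hub Hlub]].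
  { exists L. intros s [Hs _]. lra. }
  { exists 0; exact E0. }
  assert (Hm0 : 0 <= m) by (apply Hub, E0).
  assert (HmL : m <= L) by (apply Hlub; intros s [Hs _]; lra).
  assert (Hbefore : forall u, 0 <= u < m -> c < phi u).
  { intros u Hu. destruct (Rlt_dec c (phi u)) as [|Hn]; auto. exfalso.
    assert (m <= u); [|lra]. apply Hlub. intros s [Hs1 Hs2].
    destruct (Rle_dec s u); auto. exfalso. apply Hn, Hs2. lra. }
  assert (Hat : phi m <= c).
  { destruct (Rle_dec (phi m) c) as [|Hn]; auto. exfalso.
    destruct (Hc m (conj Hm0 HmL) (phi m - c)) as [delta [Hd Ht]]; [lra|].
    set (s := Rmin L (m + delta / 2)).
    assert (Hs : 0 <= s <= L /\ s <= m + delta / 2 /\ (s = L \/ m < s))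
      by (unfold s, Rmin; destruct (Rle_dec _ _); lra).
    assert (Es : E s).
    { split; [lra|]. intros u Hu. destruct (Rlt_dec u m); [apply Hbefore; lra|].
      assert (Hdu : Rdist (phi u) (phi m) < phi m - c) by (apply Ht; [lra|apply Rabs_def1; lra]).
      apply Rabs_def2 in Hdu. lra. }
    apply Hub in Es. destruct Hs as [_ [_ [HsL|Hsm]]]; [|lra]. assert (m = L) by lra. subst m. lra. }
  assert (Hmpos : 0 < m) by (destruct (Req_dec m 0) as [->|]; lra).
  exists m. split; [lra|]. split; [|exact Hbefore].
  apply Rle_antisym; [exact Hat|].
  destruct (Rle_dec c (phi m)) as [|Hn]; auto. exfalso.
  destruct (continuous_on_interval_left Rdist L phi m Hc (conj Hmpos HmL) (c - phi m))
    as [u [Hu Hdu]]; [lra|].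
  specialize (Hbefore u Hu). apply Rabs_def2 in Hdu. lra.
Qed.

Section RootedTree.
Variables (T : Type) (N : T -> R) (P : T -> T -> R).

Definition tdist (z w : T) : R := N z + N w - 2 * P z w.

Hypothesis P_sym : forall z w, P z w = P w z.
Hypothesis P_ultra : forall x y z, Rmin (P x y) (P y z) <= P x z.
Hypothesis P_le_N : forall z w, P z w <= N z.
Hypothesis P_ge0 : forall z w, 0 <= P z w.
Hypothesis P_diag : forall z, P z z = N z.
Hypothesis tdist_sep : forall z w, tdist z w = 0 -> z = w.
Variable rad : T -> R -> T.
Hypothesis rad_spec : forall z t, 0 <= t <= N z -> N (rad z t) = t /\ t <= P (rad z t) z.

Lemma P_ultra_cases x y z : P x y <= P x z \/ P y z <= P x z.
Proof. generalize (P_ultra x y z). unfold Rmin; destruct (Rle_dec _ _); lra. Qed.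

Lemma P_le_N_r z w : P z w <= N w.
Proof. rewrite P_sym; apply P_le_N. Qed.

Lemma tdist_refl z : tdist z z = 0.
Proof. unfold tdist; rewrite P_diag; lra. Qed.

Lemma tdist_ge0 z w : 0 <= tdist z w.
Proof. unfold tdist; pose proof (P_le_N z w); pose proof (P_le_N_r z w); lra. Qed.

Lemma tdist_sym z w : tdist z w = tdist w z.
Proof. unfold tdist; rewrite (P_sym z w); lra. Qed.

Lemma tdist_triangle x y z : tdist x z <= tdist x y + tdist y z.
Proof.
  unfold tdist. pose proof (P_le_N_r x y); pose proof (P_le_N y z).
  destruct (P_ultra_cases x y z); lra.
Qed.

Lemma tdist_metric : is_metric tdist.
Proof.
  split; [apply tdist_ge0|]. split; [|split; [apply tdist_sym|apply tdist_triangle]].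
  intros z w; split; [apply tdist_sep|intros ->; apply tdist_refl].
Qed.

Lemma N_sub_le_tdist z w : N z - N w <= tdist z w.
Proof. unfold tdist; pose proof (P_le_N_r z w); lra. Qed.

Lemma P_lipschitz a b z : Rabs (P a z - P b z) <= tdist a b.
Proof.
  assert (H : forall a b, P a z - P b z <= tdist a b).
  { intros a' b'. pose proof (tdist_triangle b' a' z) as Htri.
    pose proof (N_sub_le_tdist a' b'). rewrite (tdist_sym b' a') in Htri.
    unfold tdist in Htri at 1 3. lra. }
  apply Rabs_le. pose proof (H a b); pose proof (H b a) as Hba.
  rewrite (tdist_sym b a) in Hba; lra.
Qed.

(* [below w z]: [w] lies on the geodesic from the root to [z]. *)
Definition below (w z : T) : Prop := N w <= P w z.

(* The geodesic from [A] to [B] descends from [A] to the branch point at height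
   [P A B] and climbs up again to [B]. *)
Definition segment (A B w : T) : Prop := (below w A \/ below w B) /\ P A B <= N w.

Lemma below_refl z : below z z.
Proof. unfold below; rewrite P_diag; lra. Qed.

Lemma below_unique z u v : below u z -> below v z -> N u = N v -> u = v.
Proof.
  unfold below; intros Hu Hv HN. apply tdist_sep. pose proof (tdist_ge0 u v).
  unfold tdist in *. pose proof (P_sym z v); destruct (P_ultra_cases u z v); lra.
Qed.

Lemma below_branch z y w : below w z -> N w <= P z y -> below w y.
Proof. unfold below; intros Hw Hzy. destruct (P_ultra_cases w z y); lra. Qed.

Lemma tdist_below z u v : below u z -> below v z -> tdist u v = Rabs (N u - N v).
Proof.
  unfold below; intros Hu Hv.
  assert (Huv : P u v = Rmin (N u) (N v)).
  { pose proof (P_le_N u v); pose proof (P_le_N_r u v); pose proof (P_sym z v).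
    unfold Rmin; destruct (Rle_dec _ _); destruct (P_ultra_cases u z v); lra. }
  unfold tdist; rewrite Huv. unfold Rmin, Rabs.
  destruct (Rle_dec _ _); destruct (Rcase_abs _); lra.
Qed.

Lemma tdist_across A B u v : below u A -> below v B -> P A B <= N u -> P A B <= N v ->
  tdist u v = N u + N v - 2 * P A B.
Proof.
  unfold below; intros Hu Hv HAu HBv. unfold tdist.
  assert (P u v = P A B); [|lra].
  pose proof (P_le_N u v); pose proof (P_le_N_r u v).
  pose proof (P_sym A u); pose proof (P_sym v B); pose proof (P_sym B v).
  destruct (P_ultra_cases u B v); destruct (P_ultra_cases u A B);
  destruct (P_ultra_cases A v B); destruct (P_ultra_cases A u v); lra.
Qed.

Lemma segment_sym A B w : segment A B w -> segment B A w.
Proof. unfold segment; rewrite P_sym; tauto. Qed.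

Section Geodesic.
Variables A B : T.

Definition geod (t : R) : T :=
  if Rle_dec t (N A - P A B) then rad A (N A - t) else rad B (t - N A + 2 * P A B).

Lemma geod_cases t : 0 <= t <= tdist A B ->
  (t <= N A - P A B /\ below (geod t) A /\ N (geod t) = N A - t) \/
  (N A - P A B < t /\ below (geod t) B /\ N (geod t) = t - N A + 2 * P A B).
Proof.
  intros Ht. pose proof (P_le_N A B); pose proof (P_le_N_r A B); pose proof (P_ge0 A B).
  unfold tdist in Ht. unfold geod, below. destruct (Rle_dec t (N A - P A B)).
  - left. destruct (rad_spec A (N A - t)) as [E1 E2]; [lra|]. rewrite E1. lra.
  - right. destruct (rad_spec B (t - N A + 2 * P A B)) as [E1 E2]; [lra|]. rewrite E1. lra.
Qed.

Lemma geod_isometric : isometric_on tdist (tdist A B) geod.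
Proof.
  intros s t Hs Ht.
  destruct (geod_cases s Hs) as [[s1 [s2 s3]]|[s1 [s2 s3]]];
  destruct (geod_cases t Ht) as [[t1 [t2 t3]]|[t1 [t2 t3]]].
  - rewrite (tdist_below A), s3, t3, <- Rabs_Ropp by auto. f_equal; ring.
  - rewrite (tdist_across A B), s3, t3 by (auto; lra). rewrite Rabs_left1; lra.
  - rewrite tdist_sym, (tdist_across A B), s3, t3 by (auto; lra). rewrite Rabs_right; lra.
  - rewrite (tdist_below B), s3, t3 by auto. f_equal; ring.
Qed.

Lemma geod_0 : geod 0 = A.
Proof.
  pose proof (P_le_N A B). pose proof (tdist_ge0 A B).
  destruct (geod_cases 0) as [[_ [Hb HN]]|[Hlt _]]; [lra| |lra].
  apply (below_unique A); auto using below_refl. lra.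
Qed.

Lemma geod_end : geod (tdist A B) = B.
Proof.
  pose proof (P_le_N_r A B). pose proof (tdist_ge0 A B).
  destruct (geod_cases (tdist A B)) as [[Hle [Hb HN]]|[Hlt [Hb HN]]]; [lra| |].
  - unfold tdist at 1 in Hle. apply (below_unique A); auto.
    + unfold below. rewrite P_sym. lra.
    + rewrite HN. unfold tdist. lra.
  - apply (below_unique B); auto using below_refl. rewrite HN. unfold tdist. lra.
Qed.

Lemma geod_image w : segment A B w <-> exists t, 0 <= t <= tdist A B /\ geod t = w.
Proof.
  pose proof (P_le_N A B); pose proof (P_le_N_r A B); pose proof (P_ge0 A B).
  split.
  - intros [HAB Hw].
    assert (HA : below w A -> exists t, 0 <= t <= tdist A B /\ geod t = w).
    { intros HA. pose proof (P_le_N_r w A). unfold below in HA.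
      assert (Ht : 0 <= N A - N w <= tdist A B) by (unfold tdist; lra).
      exists (N A - N w). split; auto.
      destruct (geod_cases _ Ht) as [[_ [Hb HN]]|[Hlt _]]; [|lra].
      apply (below_unique A); auto. lra. }
    destruct HAB as [HwA|HwB]; auto.
    destruct (Rle_dec (N w) (P A B)).
    { apply HA, below_branch with B; auto. rewrite P_sym. lra. }
    pose proof (P_le_N_r w B). unfold below in HwB.
    assert (Ht : 0 <= N w - 2 * P A B + N A <= tdist A B) by (unfold tdist; lra).
    exists (N w - 2 * P A B + N A). split; auto.
    destruct (geod_cases _ Ht) as [[Hle _]|[_ [Hb HN]]]; [lra|].
    apply (below_unique B); auto. lra.
  - intros [t [Ht <-]]. split;
    destruct (geod_cases _ Ht) as [[Hle [Hb HN]]|[Hlt [Hb HN]]]; auto; lra.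
Qed.
End Geodesic.

Lemma segment_is_arc A B : is_arc tdist A B (segment A B).
Proof.
  exists (tdist A B), (geod A B).
  split; [apply tdist_ge0|]. split; [apply geod_0|]. split; [apply geod_end|].
  split; [|split].
  - intros s Hs eps Heps. exists eps. split; auto. intros t Ht Hts.
    rewrite geod_isometric; auto.
  - intros s t Hs Ht E. pose proof (geod_isometric A B s t Hs Ht) as Hst.
    rewrite E, tdist_refl in Hst. unfold Rabs in Hst; destruct (Rcase_abs _); lra.
  - apply geod_image.
Qed.

Lemma segment_is_geodesic A B : is_geodesic_set tdist A B (segment A B).
Proof.
  exists (geod A B). split; [apply geod_0|]. split; [apply geod_end|].
  split; [apply geod_isometric|apply geod_image].
Qed.

Lemma path_hits_below X Y L f p :
  0 <= L -> continuous_on_interval tdist L f -> f 0 = X -> f L = Y ->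
  below p X -> P X Y <= N p -> exists t, 0 <= t <= L /\ f t = p.
Proof.
  intros HL Hc Hf0 HfL HpX HXY.
  destruct (Req_dec (N p) (N X)) as [HNp|HNp].
  { exists 0. split; [lra|]. rewrite Hf0. apply (below_unique X); auto using below_refl. }
  assert (HpX' : N p < N X) by (pose proof (P_le_N_r p X); unfold below in HpX; lra).
  destruct (first_crossing (fun s => P (f s) X) L (N p)) as [m [Hm [Hfm Hbefore]]]; auto.
  - apply (continuous_on_interval_comp tdist L f (fun z => P z X)); auto.
    intros a b; apply P_lipschitz.
  - rewrite Hf0, P_diag. lra.
  - rewrite HfL, P_sym. lra.
  - set (w := f m) in *.
    assert (Hpw : below p w) by (apply below_branch with X; auto; rewrite P_sym; lra).
    (* Points of the path just before [m] are close to [w] yet branch off [X] above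
       height [N p], so [w] cannot be higher than [p]. *)
    assert (Hw : N w <= N p).
    { destruct (Rle_dec (N w) (N p)) as [|Hn]; auto. exfalso.
      destruct (continuous_on_interval_left tdist L f m Hc Hm (N w - N p))
        as [u [Hu Hdu]]; [lra|].
      specialize (Hbefore u Hu). pose proof (N_sub_le_tdist w (f u)).
      fold w in Hdu. rewrite tdist_sym in Hdu. unfold tdist in *. pose proof (P_sym w (f u)).
      destruct (P_ultra_cases w (f u) X); lra. }
    exists m. split; [lra|]. fold w. apply (below_unique w); auto using below_refl.
    pose proof (P_le_N_r p w). unfold below in Hpw. lra.
Qed.

Lemma path_hits_segment X Y L f p :
  0 <= L -> continuous_on_interval tdist L f -> f 0 = X -> f L = Y ->
  segment X Y p -> exists t, 0 <= t <= L /\ f t = p.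
Proof.
  intros HL Hc Hf0 HfL [[HpX|HpY] Hp].
  - eapply path_hits_below; eauto.
  - destruct (path_hits_below Y X L (fun s => f (L - s)) p HL) as [t [Ht E]].
    + apply continuous_on_interval_rev; auto.
    + rewrite Rminus_0_r; auto.
    + rewrite Rminus_diag; auto.
    + auto.
    + rewrite P_sym; auto.
    + exists (L - t); split; [lra|auto].
Qed.

Lemma tripod_center X p Y : P p Y <= P p X ->
  exists c, segment X p c /\ segment p Y c /\ segment X Y c.
Proof.
  intros HpYX.
  pose proof (P_le_N_r p X); pose proof (P_le_N X Y); pose proof (P_ge0 p X).
  set (m := Rmax (P p X) (P X Y)).
  assert (Hm : P p X <= m /\ P X Y <= m /\ m <= N X /\ (m = P p X \/ m = P X Y))
    by (unfold m, Rmax; destruct (Rle_dec _ _); lra).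
  destruct (rad_spec X m) as [HN Hc]; [lra|].
  assert (HcX : below (rad X m) X) by (unfold below; lra).
  exists (rad X m). unfold segment. rewrite (P_sym X p).
  split; [split; [auto|lra]|]. split; [|split; [auto|lra]].
  split; [|lra]. destruct Hm as [_ [_ [_ [Hmp|HmY]]]].
  - left. apply below_branch with X; auto. rewrite P_sym. lra.
  - right. apply below_branch with X; auto. lra.
Qed.

Lemma arc_eq_segment X Y C : is_arc tdist X Y C -> forall p, C p <-> segment X Y p.
Proof.
  intros [L [f [HL [Hf0 [HfL [Hc [Hinj Himg]]]]]]] p. split.
  - intros Cp. apply Himg in Cp. destruct Cp as [tp [Htp Hfp]].
    (* [r] is reached both by the part of the path up to [p] and by the part after
       it, so injectivity forces [r = p]. *)
    assert (Hcut : forall r, segment X p r -> segment p Y r -> r = p).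
    { intros r HXr HYr.
      destruct (path_hits_segment X p tp f r) as [t1 [Ht1 E1]]; auto; try lra.
      { apply (continuous_on_interval_restrict tdist L); auto. }
      destruct (path_hits_segment p Y (L - tp) (fun s => f (tp + s)) r) as [t2 [Ht2 E2]].
      - lra.
      - apply continuous_on_interval_shift; auto.
      - rewrite Rplus_0_r; auto.
      - replace (tp + (L - tp)) with L by ring; auto.
      - auto.
      - assert (t1 = tp + t2) by (apply Hinj; [lra|lra|congruence]).
        rewrite <- Hfp, <- E1. f_equal; lra. }
    destruct (Rle_dec (P p Y) (P p X)).
    + destruct (tripod_center X p Y) as [c [HXc [HYc Hc']]]; auto.
      rewrite <- (Hcut c); auto.
    + destruct (tripod_center Y p X) as [c [HYc [HXc Hc']]]; [lra|].
      rewrite <- (Hcut c); auto using segment_sym.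
  - intros Hp. apply Himg. eapply path_hits_segment; eauto.
Qed.

Theorem rooted_tree_is_Rtree : is_Rtree tdist.
Proof.
  split; [apply tdist_metric|]. intros X Y.
  exists (segment X Y). split; [apply segment_is_arc|].
  split; [apply arc_eq_segment|apply segment_is_geodesic].
Qed.
End RootedTree.

Lemma is_lub_real_Lub_Rbar (E : R -> Prop) r0 M :
  E r0 -> is_upper_bound E M -> is_lub E (real (Lub_Rbar E)).
Proof.
  intros H0 HM. destruct (Lub_Rbar_correct E) as [Hub Hlub].
  destruct (Lub_Rbar E) as [l| |]; simpl in *.
  - split; [exact Hub|]. intros b Hb. exact (Hlub (Finite b) Hb).
  - exfalso. exact (Hlub (Finite M) HM).
  - exfalso. exact (Hub r0 H0).
Qed.

Lemma Rmin_le_of_is_lub (E : R -> Prop) s a M :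
  is_lub E s -> (forall r, E r -> Rmin r a <= M) -> Rmin s a <= M.
Proof.
  intros [_ Hlub] HE. destruct (Rle_dec a M); [eapply Rle_trans; [apply Rmin_r|auto]|].
  eapply Rle_trans; [apply Rmin_l|]. apply Hlub. intros r Er.
  specialize (HE r Er). unfold Rmin in HE; destruct (Rle_dec r a); lra.
Qed.

Lemma last_cons_default {A : Type} (a d : A) l : last (a :: l) d = last l a.
Proof.
  revert a d. induction l as [|b l IH]; intros a d; [reflexivity|].
  change (last (b :: l) d = last (b :: l) a). rewrite !IH. reflexivity.
Qed.

Lemma last_app_default {A : Type} (l1 l2 : list A) d :
  last (l1 ++ l2) d = last l2 (last l1 d).
Proof.
  revert d. induction l1 as [|a l1 IH]; intros d; [reflexivity|].
  rewrite <- app_comm_cons, !last_cons_default. apply IH.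
Qed.

Section GromovProduct.
Variables (X : Type) (d : X -> X -> R) (x0 : X).
Hypothesis d_metric : is_metric d.

Local Notation gr := (gromov d x0).
Local Notation chain_min := (chain_min d x0).
Local Notation chain_values := (chain_values d x0).
Local Notation gr' := (gromov' d x0).
Local Notation dprime := (dprime d x0).

Lemma d_refl x : d x x = 0. Proof. apply d_metric; auto. Qed.
Lemma d_sym x y : d x y = d y x. Proof. apply d_metric. Qed.
Lemma d_triangle x y z : d x z <= d x y + d y z. Proof. apply d_metric. Qed.

Lemma gromov_ge0 x y : 0 <= gr x y.
Proof. unfold gromov. pose proof (d_triangle x x0 y); pose proof (d_sym x x0); lra. Qed.

Lemma gromov_le x y : gr x y <= d x0 x.
Proof. unfold gromov. pose proof (d_triangle x0 x y); lra. Qed.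

Lemma gromov_sym x y : gr x y = gr y x.
Proof. unfold gromov. rewrite (d_sym x y); lra. Qed.

Lemma gromov_diag x : gr x x = d x0 x.
Proof. unfold gromov. rewrite d_refl; lra. Qed.

Lemma chain_min_cons a b l : l <> nil -> chain_min a (b :: l) = Rmin (gr a b) (chain_min b l).
Proof. destruct l; [congruence|reflexivity]. Qed.

Lemma chain_min_le a l : l <> nil -> chain_min a l <= d x0 a.
Proof.
  intros Hl. destruct l as [|b [|c l]]; [congruence| |].
  - apply gromov_le.
  - rewrite chain_min_cons by congruence. eapply Rle_trans; [apply Rmin_l|apply gromov_le].
Qed.

Lemma chain_min_app a l1 l2 : l1 <> nil -> l2 <> nil ->
  chain_min a (l1 ++ l2) = Rmin (chain_min a l1) (chain_min (last l1 a) l2).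
Proof.
  revert a. induction l1 as [|b l1 IH]; intros a H1 H2; [congruence|].
  rewrite <- app_comm_cons, last_cons_default. destruct l1 as [|c l1].
  - apply chain_min_cons; auto.
  - rewrite !chain_min_cons, IH, Rmin_assoc by (auto; try congruence; destruct l2; simpl; congruence).
    reflexivity.
Qed.

Lemma chain_values_single x y : chain_values x y (gr x y).
Proof. exists (y :: nil). repeat split; congruence. Qed.

Lemma chain_values_app x y z r1 r2 :
  chain_values x y r1 -> chain_values y z r2 -> chain_values x z (Rmin r1 r2).
Proof.
  intros [l1 [H1 [E1 ->]]] [l2 [H2 [E2 ->]]]. exists (l1 ++ l2). split.
  - destruct l1; [congruence|]. simpl; congruence.
  - rewrite last_app_default, chain_min_app, E1 by auto. auto.
Qed.

Lemma chain_values_rev x y r : chain_values x y r -> chain_values y x r.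
Proof.
  intros [l [Hl [El ->]]]. revert x El. induction l as [|b l IH]; intros x El; [congruence|].
  rewrite last_cons_default in El. destruct l as [|c l].
  - simpl in El. subst b. simpl. rewrite gromov_sym. apply chain_values_single.
  - rewrite chain_min_cons, Rmin_comm by congruence. apply chain_values_app with b.
    + apply IH; [congruence|exact El].
    + rewrite gromov_sym. apply chain_values_single.
Qed.

Lemma chain_values_le x y r : chain_values x y r -> r <= d x0 x.
Proof. intros [l [Hl [_ ->]]]. apply chain_min_le; auto. Qed.

Lemma gromov'_is_lub x y : is_lub (chain_values x y) (gr' x y).
Proof.
  apply (is_lub_real_Lub_Rbar _ (gr x y) (d x0 x)); [apply chain_values_single|].
  intros r; apply chain_values_le.
Qed.

Lemma gromov_le_gromov' x y : gr x y <= gr' x y.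
Proof. apply gromov'_is_lub, chain_values_single. Qed.

Lemma gromov'_ge0 x y : 0 <= gr' x y.
Proof. eapply Rle_trans; [apply gromov_ge0|apply gromov_le_gromov']. Qed.

Lemma gromov'_le x y : gr' x y <= d x0 x.
Proof. apply gromov'_is_lub. intros r; apply chain_values_le. Qed.

Lemma gromov'_sym x y : gr' x y = gr' y x.
Proof.
  apply Rle_antisym; apply gromov'_is_lub; intros r Hr;
    apply gromov'_is_lub, chain_values_rev; auto.
Qed.

Lemma gromov'_ultra x y z : Rmin (gr' x y) (gr' y z) <= gr' x z.
Proof.
  apply (Rmin_le_of_is_lub (chain_values x y)); [apply gromov'_is_lub|]. intros r1 H1.
  rewrite Rmin_comm. apply (Rmin_le_of_is_lub (chain_values y z)); [apply gromov'_is_lub|].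
  intros r2 H2. rewrite Rmin_comm. apply gromov'_is_lub, chain_values_app with y; auto.
Qed.

Lemma gromov'_diag x : gr' x x = d x0 x.
Proof.
  apply Rle_antisym; [apply gromov'_le|]. rewrite <- gromov_diag. apply gromov_le_gromov'.
Qed.

Lemma dprime_refl x : dprime x x = 0.
Proof. unfold Defs.dprime. rewrite gromov'_diag; lra. Qed.

Lemma dprime_eq0 z z' : dprime z z' = 0 -> d x0 z = d x0 z' /\ forall u, gr' z u = gr' z' u.
Proof.
  unfold Defs.dprime. intros H.
  pose proof (gromov'_le z z'); pose proof (gromov'_le z' z). rewrite (gromov'_sym z' z) in *.
  split; [lra|]. intros u.
  pose proof (gromov'_ultra z z' u); pose proof (gromov'_ultra z' z u).
  pose proof (gromov'_le z u); pose proof (gromov'_le z' u). rewrite (gromov'_sym z' z) in *.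
  unfold Rmin in *. destruct (Rle_dec (gr' z z') (gr' z' u)); destruct (Rle_dec (gr' z z') (gr' z u)); lra.
Qed.

Definition class_of (z : X) : TX d x0 :=
  exist _ (fun w => dprime z w = 0) (ex_intro _ z eq_refl).

Lemma TX_rep_spec (A : TX d x0) : proj1_sig A = (fun w => dprime (TX_rep d x0 A) w = 0).
Proof. unfold TX_rep. destruct (constructive_indefinite_description _ _); auto. Qed.

Lemma TX_rep_class z : dprime z (TX_rep d x0 (class_of z)) = 0.
Proof.
  pose proof (f_equal (fun S => S (TX_rep d x0 (class_of z))) (TX_rep_spec (class_of z))) as E.
  simpl in E. rewrite E. apply dprime_refl.
Qed.

Lemma TX_eq (A B : TX d x0) : dprime (TX_rep d x0 A) (TX_rep d x0 B) = 0 -> A = B.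
Proof.
  intros H. destruct (dprime_eq0 _ _ H) as [Hd Hgr].
  assert (E : proj1_sig A = proj1_sig B).
  { rewrite !TX_rep_spec. apply functional_extensionality. intros w.
    apply propositional_extensionality. unfold Defs.dprime. rewrite Hd, Hgr. reflexivity. }
  destruct A as [SA HA], B as [SB HB]. apply subset_eq_compat. exact E.
Qed.

Definition tx_norm (A : TX d x0) : R := d x0 (TX_rep d x0 A).
Definition tx_prod (A B : TX d x0) : R := gr' (TX_rep d x0 A) (TX_rep d x0 B).

Hypothesis d_geodesic : geodesic_space d.

Definition root_geodesic (a : X) : R -> X :=
  proj1_sig (constructive_indefinite_description _ (d_geodesic x0 a)).

Lemma root_geodesic_point a t : 0 <= t <= d x0 a ->
  d x0 (root_geodesic a t) = t /\ t <= gr (root_geodesic a t) a.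
Proof.
  intros Ht. unfold root_geodesic.
  destruct (constructive_indefinite_description _ _) as [g [Hg0 [Hga Hiso]]].
  simpl. unfold isometric_on in Hiso.
  assert (H0t : d x0 (g t) = t).
  { rewrite <- Hg0, Hiso by lra. rewrite Rminus_0_l, Rabs_Ropp, Rabs_right; lra. }
  assert (Hta : d (g t) a = d x0 a - t).
  { rewrite <- Hga at 1. rewrite Hiso by lra. rewrite Rabs_left1; lra. }
  split; [exact H0t|]. unfold gromov. lra.
Qed.

Definition tx_radial (A : TX d x0) (t : R) : TX d x0 :=
  class_of (root_geodesic (TX_rep d x0 A) t).

Lemma tx_radial_spec A t : 0 <= t <= tx_norm A ->
  tx_norm (tx_radial A t) = t /\ t <= tx_prod (tx_radial A t) A.
Proof.
  intros Ht. unfold tx_norm, tx_prod, tx_radial.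
  set (z := root_geodesic (TX_rep d x0 A) t).
  destruct (root_geodesic_point (TX_rep d x0 A) t Ht) as [Hz Hgr]. fold z in Hz, Hgr.
  destruct (dprime_eq0 _ _ (TX_rep_class z)) as [Hd Hgr'].
  rewrite <- Hd, <- Hgr'. split; [exact Hz|].
  eapply Rle_trans; [exact Hgr|apply gromov_le_gromov'].
Qed.
End GromovProduct.

Theorem proposition3p8 (X : Type) (d : X -> X -> R)
  (Hmet : is_metric d) (Hgeo : geodesic_space d) (x0 : X) :
  @is_Rtree (TX d x0) (dstar d x0).
Proof.
  apply (rooted_tree_is_Rtree (TX d x0) (tx_norm X d x0) (tx_prod X d x0))
    with (rad := tx_radial X d x0 Hgeo).
  - intros A B. apply gromov'_sym; auto.
  - intros A B C. apply gromov'_ultra; auto.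
  - intros A B. apply gromov'_le; auto.
  - intros A B. apply gromov'_ge0; auto.
  - intros A. apply gromov'_diag; auto.
  - intros A B. apply TX_eq; auto.
  - intros A t. apply tx_radial_spec; auto.
Qed.
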